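(* Let $q\ge2$, $t,b\ge1$ and $n\ge bt+1$. For any $\sigma\in\Sigma_q$ and $j\in[0,b-1]$, let $\boldsymbol{Y}^{\sigma,j}_{n,q,b}:=\sigma^j\circ\boldsymbol{X}^{\sigma+1}_{n-j,q,b}$ (with $\sigma+1$ taken modulo $q$). Then \[ |\mathcal{D}_{t,b}(\boldsymbol{Y}^{\sigma,j}_{n,q,b})|=d_{q,b}(n,t)=D_{q,b}(n,t). \]
   Context: $\Sigma_q=\{0,\ldots,q-1\}$; $\sigma^j$ is $j$ copies of $\sigma$ and $\circ$ is concatenation. A $b$-burst-deletion at position $i\in[1,n-b+1]$ transforms $x_1\cdots x_n$ into $x_1\cdots x_{i-1}x_{i+b}\cdots x_n$. For $n\ge tb+1$, $t\ge 0$, $\mathcal{D}_{t,b}(\boldsymbol{x})$ is the set of all length-$(n-tb)$ sequences obtainable from $\boldsymbol{x}$ by $t$ successive $b$-burst-deletions ($\mathcal{D}_{0,b}(\boldsymbol{x})=\{\boldsymbol{x}\}$). $D_{q,b}(n,t)=\max\{|\mathcal{D}_{t,b}(\boldsymbol{x})|:\boldsymbol{x}\in\Sigma_q^n\}$. The $b$-cyclic sequence $\boldsymbol{X}^{\sigma}_{m,q,b}=X_1\cdots X_m$ has $X_i\equiv\sigma+\lfloor (i-1)/b\rfloor\pmod q$. For $m\ge bs+1$, $s\ge0$, $d_{q,b}(m,s):=|\mathcal{D}_{s,b}(\boldsymbol{X}^0_{m,q,b})|$; $d_{q,b}(m,s)=1$ if $m=bs\ge0$, and $d_{q,b}(m,s)=0$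 if $m<bs$ or $s<0$. *)

From mathcomp Require Import all_boot.
Set Implicit Arguments. Unset Strict Implicit. Unset Printing Implicit Defensive.

(* Sequences over Sigma_q = {0,...,q-1} are represented as seq nat. *)

(* b-burst-deletion at 0-indexed position i (paper's position i+1):
   removes x_{i+1} ... x_{i+b}. *)
Definition burst_del (b i : nat) (x : seq nat) : seq nat :=
  take i x ++ drop (i + b) x.

Definition burst_dels (b : nat) (x : seq nat) : seq (seq nat) :=
  if b <= size x then [seq burst_del b i x | i <- iota 0 (size x - b).+1]
  else [::].

Definition Dset (t b : nat) (x : seq nat) : seq (seq nat) :=
  iter t (fun S => undup (flatten (map (burst_dels b) S))) [:: x].

Definition Dcard (t b : nat) (x : seq nat) : nat := size (Dset t b x).

Definition Dmax (q b n t : nat) : nat :=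
  \max_(x : n.-tuple 'I_q) Dcard t b [seq nat_of_ord i | i <- x].

(* b-cyclic sequence X^sigma_{m,q,b}: X_i = sigma + floor((i-1)/b) mod q
   (1-indexed i; here 0-indexed). *)
Definition Xcyc (sigma m q b : nat) : seq nat :=
  mkseq (fun i => (sigma + i %/ b) %% q) m.

Definition dcyc (q b m s : nat) : nat :=
  if b * s < m then Dcard s b (Xcyc 0 m q b)
  else if m == b * s then 1 else 0.

Definition Ycyc (sigma j n q b : nat) : seq nat :=
  nseq j sigma ++ Xcyc ((sigma + 1) %% q) (n - j) q b.

From mathcomp Require Import all_boot zify.
Set Implicit Arguments. Unset Strict Implicit. Unset Printing Implicit Defensive.

(* Every word of D_t(x) starts with a block head x_(kb), k <= t, followed by a
   word of D_(t-k) of the suffix after it.  Keeping for each head value only the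
   earliest such block, |D_t(x)| is a sum of |D_(t-k)| over at most q values of k.
   For a window of a b-cyclic word the first min(t+1, q) block heads are distinct
   and every suffix is again such a window, so by induction the count depends only
   on the length; this covers Y^(sigma,j).  For an arbitrary word, induction bounds
   each term by the cyclic one; these decrease in k, so a sum over at most q of
   them is dominated by the sum of the first ones, which is the cyclic count. *)

Lemma uniq_flatten_cons (I : eqType) (T : eqType) (ks : seq I) (hd : I -> T)
    (G : I -> seq (seq T)) :
  uniq (map hd ks) -> (forall k, uniq (G k)) ->
  uniq (flatten [seq map (cons (hd k)) (G k) | k <- ks]).
Proof.
elim: ks => [|k ks IH] //= /andP [hd_k uniq_hd] uniq_G.
rewrite cat_uniq IH // andbT.
rewrite map_inj_uniq ?uniq_G //=; last by move=> ? ? [].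
apply/hasPn => z /flatten_mapP [k' k'ks /mapP [w _ ->]]; apply/mapP => -[w' _ [hd_eq _]].
by move: hd_k; rewrite -hd_eq map_f.
Qed.

Section BurstDeletions.
Variable b : nat.
Local Notation D t x := (Dset t b x).

Lemma uniq_Dset t x : uniq (D t x).
Proof. by case: t => [|t] //=; apply: undup_uniq. Qed.

Lemma mem_DsetS t x y :
  (y \in D t.+1 x) = has (fun z => y \in burst_dels b z) (D t x).
Proof.
rewrite /Dset iterS -/(Dset t b x) mem_undup.
by apply/flatten_mapP/hasP => -[z zD yz]; exists z.
Qed.

Lemma burst_delsP x y :
  reflect (b <= size x /\ exists2 i, i <= size x - b & y = burst_del b i x)
          (y \in burst_dels b x).
Proof.
rewrite /burst_dels; case: ifP => bx; last by rewrite in_nil; constructor => -[].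
apply: (iffP mapP) => [[i + ->]|[_ [i + ->]]]; rewrite ?mem_iota => ilt.
  by split=> //; exists i => //; lia.
by exists i; rewrite // mem_iota; lia.
Qed.

Lemma size_burst_del x i :
  b <= size x -> i <= size x - b -> size (burst_del b i x) = size x - b.
Proof. by rewrite /burst_del size_cat size_take size_drop; case: ifP; lia. Qed.

Lemma size_Dset t x y : y \in D t x -> size y + t * b = size x.
Proof.
elim: t y => [|t IH] y /=; first by rewrite inE => /eqP ->; lia.
rewrite mem_DsetS => /hasP [z /IH <- /burst_delsP [bz [i ilt ->]]].
by rewrite size_burst_del // mulSn addnA subnK.
Qed.

Lemma DsetDP r s x y :
  reflect (exists2 z, z \in D r x & y \in D s z) (y \in D (r + s) x).
Proof.
elim: s y => [|s IH] y.
  rewrite addn0; apply: (iffP idP) => [yx|[z zx]]; first by exists y; rewrite ?inE.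
  by rewrite /= inE => /eqP ->.
rewrite addnS mem_DsetS; apply: (iffP hasP).
  move=> [w /IH [z zx wz] yw]; exists z => //.
  by rewrite mem_DsetS; apply/hasP; exists w.
move=> [z zx]; rewrite mem_DsetS => /hasP [w wz yw].
by exists w => //; apply/IH; exists z.
Qed.

Lemma mem_Dset1 x y : (y \in D 1 x) = (y \in burst_dels b x).
Proof. by rewrite mem_DsetS /= orbF. Qed.

Lemma DsetSP t x y :
  reflect (exists2 z, z \in burst_dels b x & y \in D t z) (y \in D t.+1 x).
Proof.
rewrite -add1n; apply: (iffP (DsetDP _ _ _ _)) => -[z zx yz];
  by exists z; rewrite ?mem_Dset1 // -mem_Dset1.
Qed.

Lemma drop_mem_Dset d x : d * b <= size x -> drop (d * b) x \in D d x.
Proof.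
elim: d => [|d IH] dx; first by rewrite drop0 /= inE.
rewrite mem_DsetS; apply/hasP; exists (drop (d * b) x); first by apply: IH; lia.
apply/burst_delsP; split; first by rewrite size_drop; lia.
by exists 0 => //; rewrite /burst_del take0 drop_drop mulSn addnC.
Qed.

Lemma cons_burst_dels a w z :
  z \in burst_dels b w -> a :: z \in burst_dels b (a :: w).
Proof.
move=> /burst_delsP [bw [i ilt ->]]; apply/burst_delsP; split=> /=; first lia.
by exists i.+1; [lia | rewrite /burst_del].
Qed.

Lemma cons_Dset t a w z : z \in D t w -> a :: z \in D t (a :: w).
Proof.
elim: t z => [|t IH] z /=; first by rewrite !inE => /eqP ->.
rewrite !mem_DsetS => /hasP [z' /IH z'D zz']; apply/hasP; exists (a :: z') => //.
exact: cons_burst_dels.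
Qed.

Lemma drop_burst_del m i x : m <= i -> i <= size x ->
  drop m (burst_del b i x) = burst_del b (i - m) (drop m x).
Proof.
move=> mi ix; rewrite /burst_del take_drop drop_drop subnK // drop_cat size_take.
rewrite (_ : i - m + b + m = i + b); last lia.
have -> : (if i < size x then i else size x) = i by case: ifP; lia.
case: ltnP => // im; have -> : m = i by lia.
by rewrite subnn drop0 (@drop_oversize _ i) // size_take; case: ifP; lia.
Qed.

Lemma cons_block_head_Dset t k x y : k <= t -> k * b < size x ->
  y \in D (t - k) (drop (k * b).+1 x) -> nth 0 x (k * b) :: y \in D t x.
Proof.
move=> kt kx yD; rewrite -(subnKC kt); apply/DsetDP.
exists (drop (k * b) x); first by apply: drop_mem_Dset; lia.
by rewrite (drop_nth 0) //; apply: cons_Dset.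
Qed.

(* The first symbol of a word of [D t x] is some block head [x_(k b)], k <= t:
   a deletion before it only shifts it by [b], a deletion after it is kept. *)
Lemma Dset_block_head t x y : y \in D t x -> t * b < size x ->
  exists k, [/\ k <= t, k * b < size x &
    exists2 y', y = nth 0 x (k * b) :: y' & y' \in D (t - k) (drop (k * b).+1 x)].
Proof.
elim: t x y => [|t IH] x y.
  rewrite /= inE => /eqP -> x_gt0; exists 0; split => //.
  by case: x x_gt0 => [|a x] // _; exists x; rewrite //= drop0 inE.
move=> /DsetSP [z /burst_delsP [bx [i ilt ->]] yD] tx.
have size_z : size (burst_del b i x) = size x - b by apply: size_burst_del.
have [k [kt kz [y' -> y'D]]] := IH _ _ yD ltac:(rewrite size_z; rewrite mulSn in tx; lia).
rewrite size_z in kz.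
have size_take_i : size (take i x) = i by rewrite size_take; case: ifP; lia.
case: (ltnP (k * b) i) => ki.
  exists k; split; [lia | lia |].
  exists y'; first by rewrite /burst_del nth_cat size_take_i ki nth_take.
  rewrite subSn //; apply/DsetSP; exists (burst_del b (i - (k * b).+1) (drop (k * b).+1 x)).
    apply/burst_delsP; rewrite size_drop; split; first lia.
    by exists (i - (k * b).+1) => //; lia.
  by rewrite -drop_burst_del //; lia.
exists k.+1; split; [lia | rewrite mulSn; lia |].
exists y'.
  rewrite /burst_del nth_cat size_take_i ltnNge ki /= nth_drop.
  by congr (nth _ _ _ :: _); rewrite mulSn; lia.
rewrite subSS; congr (_ \in Dset _ _ _): y'D.
rewrite /burst_del drop_cat size_take_i ltnNge (leq_trans ki) //= drop_drop mulSn.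
by congr drop; lia.
Qed.

Definition new_block_head (x : seq nat) k :=
  all (fun i => nth 0 x (i * b) != nth 0 x (k * b)) (iota 0 k).

Lemma uniq_new_block_heads x n :
  uniq [seq nth 0 x (k * b) | k <- filter (new_block_head x) (iota 0 n)].
Proof.
elim: n => [|n IH] //.
rewrite -addn1 iotaD add0n filter_cat map_cat cat_uniq IH /=.
case new_n: (new_block_head x n) => //=; rewrite orbF andbT.
apply/mapP => -[i]; rewrite mem_filter mem_iota => /and3P [_ _ i_lt_n] head_eq.
by move/allP: new_n => /(_ i); rewrite mem_iota i_lt_n head_eq eqxx => /(_ isT).
Qed.

(* A word of [D t x] starting with the head of block [k] also lies in the part
   of the earliest block with the same head, since [D] is monotone in deletions
   from the front. *)
Lemma Dset_new_block_heads t x : t * b < size x ->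
  D t x =i flatten [seq map (cons (nth 0 x (k * b))) (D (t - k) (drop (k * b).+1 x))
                   | k <- filter (new_block_head x) (iota 0 t.+1)].
Proof.
move=> tx y; apply/idP/flatten_mapP => [yD|[k + /mapP [y' y'D ->]]]; last first.
  rewrite mem_filter mem_iota => /and3P [_ _ kt].
  by apply: cons_block_head_Dset => //; apply: leq_ltn_trans tx; apply: leq_mul.
have [k [kt kx [y' -> y'D]]] := Dset_block_head yD tx.
have same_head : exists i, (i <= t) && (nth 0 x (i * b) == nth 0 x (k * b)).
  by exists k; rewrite kt eqxx.
case: (ex_minnP same_head) => k0 /andP [k0t /eqP head_eq] k0_min.
have k0k : k0 <= k by apply: k0_min; rewrite kt eqxx.
exists k0.
  rewrite mem_filter mem_iota /= ltnS k0t andbT; apply/allP => i.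
  rewrite mem_iota => /andP [_ ik0]; rewrite head_eq; apply/negP => /eqP head_i.
  by have := k0_min i; rewrite head_i eqxx andbT; lia.
rewrite -head_eq; apply: map_f.
rewrite (_ : t - k0 = (k - k0) + (t - k)); last lia.
apply/DsetDP; exists (drop (k * b).+1 x) => //.
have kbk0b : k0 * b <= k * b by apply: leq_mul.
have -> : drop (k * b).+1 x = drop ((k - k0) * b) (drop (k0 * b).+1 x).
  by rewrite drop_drop mulnBl; congr drop; lia.
by apply: drop_mem_Dset; rewrite size_drop mulnBl; lia.
Qed.

Lemma Dcard_new_block_heads t x : t * b < size x ->
  Dcard t b x =
  \sum_(k <- iota 0 t.+1 | new_block_head x k) Dcard (t - k) b (drop (k * b).+1 x).
Proof.
move=> tx; rewrite /Dcard (perm_size (uniq_perm (uniq_Dset _ _) _ (Dset_new_block_heads tx))).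
  rewrite size_flatten /shape -map_comp sumnE big_map big_filter.
  by apply: eq_bigr => k _; rewrite /= size_map.
by apply: uniq_flatten_cons; [exact: uniq_new_block_heads | move=> k; exact: uniq_Dset].
Qed.

Lemma Dcard_full t x : size x = t * b -> Dcard t b x = 1.
Proof.
move=> xtb; have nil_D y : y \in D t x -> y = [::].
  by move/size_Dset; rewrite xtb => ?; apply/size0nil; lia.
have : drop (t * b) x \in D t x by apply: drop_mem_Dset; rewrite xtb.
rewrite /Dcard => /[dup] /nil_D -> nilD.
rewrite (perm_size (uniq_perm (uniq_Dset t x) (_ : uniq [:: [::]]) _)) // => y.
by rewrite inE; apply/idP/eqP => [/nil_D | ->].
Qed.

Lemma Dcard_drop_leq t x : b <= size x -> Dcard t b (drop b x) <= Dcard t.+1 b x.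
Proof.
move=> bx; apply: uniq_leq_size; first exact: uniq_Dset.
move=> y yD; apply/DsetSP; exists (drop b x) => //.
by apply/burst_delsP; split=> //; exists 0 => //; rewrite /burst_del take0.
Qed.

End BurstDeletions.

Lemma filter_iota_lt q n : [seq k <- iota 0 n | k < q] = iota 0 (minn n q).
Proof.
case: leqP => [nq | /ltnW qn]; last exact (filter_iota_ltn 0 qn).
by apply/all_filterP/allP => k; rewrite mem_iota; lia.
Qed.

Lemma all_modn_neq q k : 0 < q -> all (fun i => i %% q != k %% q) (iota 0 k) = (k < q).
Proof.
move=> q_gt0; case: (ltnP k q) => kq.
  by apply/allP => i; rewrite mem_iota => /andP [_ ik]; rewrite !modn_small //; lia.
apply/negbTE/negP => /allP /(_ (k %% q)); rewrite mem_iota modn_mod eqxx /=.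
by have := ltn_pmod k q_gt0; lia.
Qed.

Section CyclicWords.
Variables b q : nat.
Hypotheses (b_gt0 : 0 < b) (q_gt0 : 0 < q).

(* The window of length [M] starting at position [o] of the infinite b-cyclic
   word with first symbol [c]; [Xshift c 0 M] is convertible to [Xcyc c M q b]. *)
Definition Xshift c o M := mkseq (fun i => (c + (o + i) %/ b) %% q) M.

Lemma drop_Xshift d c o M : drop d (Xshift c o M) = Xshift c (o + d) (M - d).
Proof.
apply: (@eq_from_nth _ 0); first by rewrite size_drop !size_mkseq.
move=> i; rewrite size_drop size_mkseq => iM.
by rewrite nth_drop !nth_mkseq ?addnA ?(addnC d) //; lia.
Qed.

Lemma new_block_head_Xshift c o M k :
  k * b < M -> new_block_head b (Xshift c o M) k = (k < q).
Proof.
move=> kM; rewrite /new_block_head -(all_modn_neq k q_gt0).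
apply: eq_in_all => i; rewrite mem_iota => /andP [_ ik].
have iM : i * b < M by apply: leq_ltn_trans kM; apply: leq_mul; lia.
rewrite !nth_mkseq // !(addnC o) !divnMDl // !addnA -!(addnC (o %/ b)) !addnA.
by rewrite eqn_modDl.
Qed.

Lemma Dcard_Xshift_heads c o M s : s * b < M ->
  Dcard s b (Xshift c o M) =
  \sum_(k <- iota 0 (minn s.+1 q))
     Dcard (s - k) b (Xshift c (o + (k * b).+1) (M - (k * b).+1)).
Proof.
move=> sM; rewrite Dcard_new_block_heads ?size_mkseq // -filter_iota_lt big_filter.
rewrite big_seq_cond [RHS]big_seq_cond; apply: eq_big => [k | k /andP [+ _]].
  case kM: (k \in iota 0 s.+1); rewrite ?andbT ?andbF // new_block_head_Xshift //.
  by apply: leq_ltn_trans sM; apply: leq_mul => //; move: kM; rewrite mem_iota; lia.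
by rewrite drop_Xshift.
Qed.

Lemma Dcard_Xshift M s c o :
  s * b <= M -> Dcard s b (Xshift c o M) = Dcard s b (Xcyc 0 M q b).
Proof.
elim/ltn_ind: M => M IH in s c o *; case: s => [// | s] sM.
case: (ltnP (s.+1 * b) M) => [sM' | Ms]; last first.
  by rewrite !Dcard_full ?size_mkseq //; lia.
rewrite -[Xcyc 0 M q b]/(Xshift 0 0 M) !Dcard_Xshift_heads //.
rewrite big_seq [RHS]big_seq; apply: eq_bigr => k; rewrite mem_iota leq_min => /and3P [_ ks _].
have kbsb : k * b <= s.+1 * b by apply: leq_mul; lia.
have sk_bound : (s.+1 - k) * b <= M - (k * b).+1 by rewrite mulnBl; lia.
by rewrite [LHS]IH 1?[RHS]IH //; lia.
Qed.

Lemma Dcard_Xcyc_drop_leq M s : s.+1 * b <= M ->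
  Dcard s b (Xcyc 0 (M - b) q b) <= Dcard s.+1 b (Xcyc 0 M q b).
Proof.
move=> sM; rewrite mulSn in sM.
rewrite -(Dcard_Xshift 0 b); last lia.
rewrite -[Xcyc 0 M q b]/(Xshift 0 0 M) -[b in Xshift 0 b]/(0 + b) -drop_Xshift.
by apply: Dcard_drop_leq; rewrite size_mkseq; lia.
Qed.

End CyclicWords.

Lemma leq_sum_filter_nonincreasing (f : nat -> nat) (P : pred nat) n m :
  (forall k, k.+1 < n -> f k.+1 <= f k) -> count P (iota 0 n) <= m ->
  \sum_(k <- iota 0 n | P k) f k <= \sum_(k <- iota 0 (minn n m)) f k.
Proof.
elim: n m => [|n IH] m f_step; first by rewrite big_nil.
have f_step' k : k.+1 < n -> f k.+1 <= f k by move=> ?; apply: f_step; lia.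
rewrite -addn1 iotaD count_cat big_cat add0n /= big_cons big_nil addn0.
case: (P n) => /= countP; last first.
  rewrite addn0; apply: leq_trans (IH m f_step' _) _; first lia.
  by rewrite -(subnKC (_ : minn n m <= minn (n + 1) m)) ?iotaD ?big_cat ?leq_addr //; lia.
have -> : minn (n + 1) m = minn n m.-1 + 1 by lia.
rewrite iotaD big_cat add0n /= big_cons big_nil addn0 leq_add ?IH //; first lia.
have f_le d : minn n m.-1 + d <= n -> f (minn n m.-1 + d) <= f (minn n m.-1).
  elim: d => [|d IHd]; rewrite ?addn0 // addnS => d_le.
  by apply: leq_trans (f_step _ _) (IHd _); lia.
by have := f_le (n - minn n m.-1); rewrite subnKC; lia.
Qed.

Section CyclicWordsAreExtremal.
Variables b q : nat.
Hypotheses (b_gt0 : 0 < b) (q_gt0 : 0 < q).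

Lemma count_new_block_heads_leq x n :
  all (fun v => v < q) x -> count (new_block_head b x) (iota 0 n) <= q.
Proof.
move=> xq; rewrite -size_filter -(size_map (fun k => nth 0 x (k * b))) -(size_iota 0 q).
apply: uniq_leq_size; first exact: uniq_new_block_heads.
move=> v /mapP [k _ ->]; rewrite mem_iota /=.
case: (ltnP (k * b) (size x)) => kx; last by rewrite nth_default.
by apply: (allP xq); apply: mem_nth.
Qed.

Lemma Dcard_Xcyc_tail_step n t k : k < t -> t * b < n ->
  Dcard (t - k.+1) b (Xcyc 0 (n - (k.+1 * b).+1) q b) <=
  Dcard (t - k) b (Xcyc 0 (n - (k * b).+1) q b).
Proof.
move=> kt tn; have kbtb : k.+1 * b <= t * b by apply: leq_mul.
have -> : t - k = (t - k.+1).+1 by lia.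
have -> : n - (k.+1 * b).+1 = n - (k * b).+1 - b by rewrite mulSn; lia.
apply: Dcard_Xcyc_drop_leq => //.
by rewrite mulSn mulnBl; rewrite mulSn in kbtb *; lia.
Qed.

Lemma Dcard_leq_Xcyc n t x : size x = n -> all (fun v => v < q) x -> t * b <= n ->
  Dcard t b x <= Dcard t b (Xcyc 0 n q b).
Proof.
elim/ltn_ind: n => n IH in t x *; case: t => [// | t] xn xq tn.
case: (ltnP (t.+1 * b) n) => [tn' | nt]; last by rewrite !Dcard_full ?size_mkseq //; lia.
pose f k := Dcard (t.+1 - k) b (Xcyc 0 (n - (k * b).+1) q b).
apply: (@leq_trans (\sum_(k <- iota 0 t.+2 | new_block_head b x k) f k)).
  rewrite Dcard_new_block_heads ?xn // big_seq_cond [leqRHS]big_seq_cond.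
  apply: leq_sum => k /andP [+ _]; rewrite mem_iota => /andP [_ kt].
  have kbtb : k * b <= t.+1 * b by apply: leq_mul; lia.
  apply: IH; first lia.
  - by rewrite size_drop xn.
  - by apply/allP => v /mem_drop /(allP xq).
  by rewrite mulnBl; lia.
have f_step k : k.+1 < t.+2 -> f k.+1 <= f k by move=> kt; apply: Dcard_Xcyc_tail_step.
apply: leq_trans (leq_sum_filter_nonincreasing f_step (count_new_block_heads_leq _ xq)) _.
rewrite -[Xcyc 0 n q b]/(Xshift b q 0 0 n) Dcard_Xshift_heads ?size_mkseq //.
rewrite big_seq [leqRHS]big_seq; apply: leq_sum => k; rewrite mem_iota leq_min => /and3P [_ kt _].
have kbtb : k * b <= t.+1 * b by apply: leq_mul; lia.
by rewrite Dcard_Xshift // mulnBl; lia.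
Qed.

End CyclicWordsAreExtremal.

Lemma Xcyc_lt sigma m q b : 0 < q -> all (fun v => v < q) (Xcyc sigma m q b).
Proof. by move=> q_gt0; apply/allP => v /mapP [i _ ->]; apply: ltn_pmod. Qed.

Lemma Ycyc_Xshift sigma j n q b : 0 < b -> sigma < q -> j < b -> j <= n ->
  Ycyc sigma j n q b = Xshift b q sigma (b - j) n.
Proof.
move=> b_gt0 sq jb jn; apply: (@eq_from_nth _ 0).
  by rewrite size_cat size_nseq !size_mkseq; lia.
move=> i; rewrite size_cat size_nseq size_mkseq => ilt.
rewrite [RHS]nth_mkseq; last lia.
rewrite nth_cat size_nseq; case: ltnP => ij.
  by rewrite nth_nseq ij divn_small ?addn0 ?modn_small //; lia.
rewrite nth_mkseq; last lia.
rewrite (_ : b - j + i = 1 * b + (i - j)); last lia.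
by rewrite divnMDl // modnDml addnA.
Qed.

Lemma Dcard_leq_Dmax q b n t x : 0 < q -> size x = n -> all (fun v => v < q) x ->
  Dcard t b x <= Dmax q b n t.
Proof.
case: q => [// | q] _ xn xq; have size_x : size (map (@inord q) x) == n by rewrite size_map xn.
rewrite /Dmax; apply: leq_trans (leq_bigmax (Tuple size_x)).
by rewrite /= -map_comp map_id_in // => v /(allP xq) /inordK.
Qed.

Lemma Dmax_leq q b n t m :
  (forall x, size x = n -> all (fun v => v < q) x -> Dcard t b x <= m) -> Dmax q b n t <= m.
Proof.
move=> bound; apply/bigmax_leqP => x _; apply: bound; first by rewrite size_map size_tuple.
by apply/allP => v /mapP [i _ ->].
Qed.

Theorem theorem4p9 (q t b n sigma j : nat) :
  2 <= q -> 1 <= t -> 1 <= b -> b * t + 1 <= n ->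
  sigma < q -> j <= b - 1 ->
  Dcard t b (Ycyc sigma j n q b) = dcyc q b n t /\
  dcyc q b n t = Dmax q b n t.
Proof.
move=> q_ge2 t_gt0 b_gt0 n_gt sq jb.
have q_gt0 : 0 < q by lia.
have b_le_bt : b <= b * t := leq_pmulr b t_gt0.
have tbn : t * b <= n by lia.
have -> : dcyc q b n t = Dcard t b (Xcyc 0 n q b) by rewrite /dcyc ifT //; lia.
split; first by rewrite Ycyc_Xshift ?Dcard_Xshift //; lia.
apply/eqP; rewrite eqn_leq Dcard_leq_Dmax ?size_mkseq ?Xcyc_lt //=.
by apply: Dmax_leq => x xn xq; apply: Dcard_leq_Xcyc.
Qed.
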